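(* Let $K_t(\omega)$ be a weighted complete graph on $[t]$. Suppose $K_t(\omega)$ contains $\ell_1$ copies of $C_8$, $\ell_2$ copies of $K_5$, $\ell_3$ copies of $C_5$, $\ell_4$ copies of $K_4$, $\ell_5$ copies of $C_4$, $\ell_6$ copies of $K_3$ and $\ell_7$ single edges, such that all these subgraphs are pairwise vertex-disjoint and each of them is half (every edge of each of these subgraphs has weight $\frac12$). Then $$2g(K_t(\omega))\le 1-\frac{30}{30t-120\ell_1-100\ell_2-75\ell_3-72\ell_4-60\ell_5-45\ell_6-20\ell_7}.$$
   Context: A weighted complete graph $K_t(\omega)$ is the complete graph on vertex set $[t]$ in which every edge $ij$ has a weight $\omega(i,j)\in\{\frac12,1\}$; an edge is called half if its weight is $\frac12$ and full if its weight is $1$, and a subgraph is half if all its edges are half. Its edge density is $g(K_t(\omega))=\max_{\mathbf u}\sum_{1\le i<j\le t}\omega(i,j)u_iu_j$, the maximum taken over all $\mathbf u=(u_1,\dots,u_t)$ with $u_i\ge 0$ and $\sum_i u_i=1$. *)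

From HB Require Import structures.
From mathcomp Require Import all_boot all_order all_algebra.
From mathcomp Require Import all_classical all_reals.
Set Implicit Arguments. Unset Strict Implicit. Unset Printing Implicit Defensive.
Import Order.TTheory GRing.Theory Num.Theory.
Local Open Scope classical_set_scope.
Local Open Scope ring_scope.

Definition weighted_complete {R : realType} (t : nat) (w : 'I_t -> 'I_t -> R) :=
  (forall i j, w i j = w j i) /\
  (forall i j, i != j -> w i j = 1/2 \/ w i j = 1).

Definition simplex {R : realType} (t : nat) : set ('I_t -> R) :=
  [set u | (forall i, 0 <= u i) /\ \sum_(i < t) u i = 1].

Definition wform {R : realType} (t : nat) (w : 'I_t -> 'I_t -> R) (u : 'I_t -> R) : R :=
  \sum_(i < t) \sum_(j < t | (i < j)%N) w i j * u i * u j.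

(* edge density g(K_t(w)) = max over the simplex (taken as a sup; the max is attained) *)
Definition edge_density {R : realType} (t : nat) (w : 'I_t -> 'I_t -> R) : R :=
  sup [set wform w u | u in @simplex R t].

(* a half copy of the cycle C_k, given by its vertices f 0, ..., f (k-1) in cyclic order *)
Definition half_cycle {R : realType} (t k : nat) (w : 'I_t -> 'I_t -> R) (f : 'I_k -> 'I_t) :=
  injective f /\ forall i : 'I_k, w (f i) (f (ordS i)) = 1/2.

(* a half copy of the complete graph K_k (k = 2 gives a single half edge) *)
Definition half_clique {R : realType} (t k : nat) (w : 'I_t -> 'I_t -> R) (f : 'I_k -> 'I_t) :=
  injective f /\ forall i j : 'I_k, i != j -> w (f i) (f j) = 1/2.

(* all vertex slots of all copies together; injectivity of the combined map
   means that all copies are pairwise vertex-disjoint *)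
Definition slots (l1 l2 l3 l4 l5 l6 l7 : nat) : Type :=
  ('I_l1 * 'I_8) + (('I_l2 * 'I_5) + (('I_l3 * 'I_5) + (('I_l4 * 'I_4) +
  (('I_l5 * 'I_4) + (('I_l6 * 'I_3) + ('I_l7 * 'I_2)))))).

Definition packing_map (t l1 l2 l3 l4 l5 l6 l7 : nat)
  (c1 : 'I_l1 -> 'I_8 -> 'I_t) (c2 : 'I_l2 -> 'I_5 -> 'I_t)
  (c3 : 'I_l3 -> 'I_5 -> 'I_t) (c4 : 'I_l4 -> 'I_4 -> 'I_t)
  (c5 : 'I_l5 -> 'I_4 -> 'I_t) (c6 : 'I_l6 -> 'I_3 -> 'I_t)
  (c7 : 'I_l7 -> 'I_2 -> 'I_t) (x : slots l1 l2 l3 l4 l5 l6 l7) : 'I_t :=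
  match x with
  | inl (a, i) => c1 a i
  | inr (inl (a, i)) => c2 a i
  | inr (inr (inl (a, i))) => c3 a i
  | inr (inr (inr (inl (a, i)))) => c4 a i
  | inr (inr (inr (inr (inl (a, i))))) => c5 a i
  | inr (inr (inr (inr (inr (inl (a, i)))))) => c6 a i
  | inr (inr (inr (inr (inr (inr (a, i)))))) => c7 a i
  end.

From HB Require Import structures.
From mathcomp Require Import all_boot all_order all_algebra.
From mathcomp Require Import all_classical all_reals.
From mathcomp Require Import ring lra zify.
Set Implicit Arguments. Unset Strict Implicit. Unset Printing Implicit Defensive.
Import Order.TTheory GRing.Theory Num.Theory.
Local Open Scope ring_scope.

(* Let m(i,i) = 1 and m(i,j) = 1 - w(i,j) otherwise ([coweight]), and
   N_i = sum_j m(i,j) u_j ([coload]).  On the simplex, 1 - 2 g_u = sum_i u_i N_i,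
   and for every mu this equals sum_i E_i + 2 mu - t mu^2, where
   E_i = u_i N_i - 2 mu u_i + mu^2 ([excess]) is at least (u_i - mu)^2 >= 0.
   Since half edges have coweight 1/2, the E_i sum to at least k mu^2 / 2 on a
   half C_k and to at least k(k-1)/(k+1) mu^2 on a half K_k.  Hence
   1 - 2 g_u >= 2 mu - D mu^2, with 30 D the denominator in the theorem, and
   mu = 1/D gives the bound. *)

Lemma ler_sum_inj (R : numDomainType) (I J : finType) (g : I -> J) (F : J -> R) :
  injective g -> (forall j, 0 <= F j) -> \sum_i F (g i) <= \sum_j F j.
Proof.
move=> g_inj F_ge0.
rewrite -(big_imset _ (in2W g_inj)) /= [leRHS](bigID [in g @: xpredT]) /=.
by rewrite lerDl sumr_ge0.
Qed.

Lemma ler_sum_blocks (R : numDomainType) (T : Type) l k (c : 'I_l -> 'I_k -> T)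
    (F : T -> R) d :
  (forall a, d <= \sum_p F (c a p)) ->
  l%:R * d <= \sum_(x : 'I_l * 'I_k) F (let (a, p) := x in c a p).
Proof.
move=> block_ge.
rewrite (eq_bigr (fun x => F (c x.1 x.2))) => [|[a p] _ //].
rewrite -(pair_bigA _ (fun a p => F (c a p))) /=.
apply: le_trans (ler_sum _ (fun a _ => block_ge a)).
by rewrite sumr_const card_ord mulr_natl.
Qed.

Lemma modn_addr_neq n i k : (i < n -> 0 < k < n -> (i + k) %% n != i)%N.
Proof.
move=> ltin /andP[k_gt0 ltkn]; case: (ltnP (i + k) n) => h.
  by rewrite modn_small //; lia.
have -> : (i + k = (i + k - n) + n)%N by rewrite subnK.
by rewrite modnDr modn_small; lia.
Qed.

Lemma ordS_neq n (i : 'I_n) : (1 < n)%N -> ordS i != i.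
Proof. by move=> n_gt1; rewrite -val_eqE /= -[i.+1]addn1 modn_addr_neq. Qed.

Lemma ordSS_neq n (i : 'I_n) : (2 < n)%N -> ordS (ordS i) != i.
Proof.
move=> n_gt2; rewrite -val_eqE /= -[(_ %% n).+1]addn1 modnDml.
by rewrite addn1 -[i.+2]addn2 modn_addr_neq.
Qed.

Lemma ord_pred_neq n (i : 'I_n) : (1 < n)%N -> ord_pred i != i.
Proof. by move=> n_gt1; rewrite -(inj_eq (@ordS_inj n)) ord_predK eq_sym ordS_neq. Qed.

Lemma ord_pred_neq_ordS n (i : 'I_n) : (2 < n)%N -> ord_pred i != ordS i.
Proof. by move=> n_gt2; rewrite -(inj_eq (@ordS_inj n)) ord_predK eq_sym ordSS_neq. Qed.

Section Excess.
Variables (R : realType) (t : nat) (w : 'I_t -> 'I_t -> R).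
Hypothesis w_complete : weighted_complete w.

Definition coweight i j : R := if i == j then 1 else 1 - w i j.

Definition coload (u : 'I_t -> R) i := \sum_j coweight i j * u j.

Definition excess (u : 'I_t -> R) mu i := u i * coload u i - 2 * mu * u i + mu ^+ 2.

Lemma coweight_ge0 i j : 0 <= coweight i j.
Proof.
rewrite /coweight; case: eqVneq => [//|ij].
by case: (w_complete.2 i j ij) => ->; lra.
Qed.

Lemma coweight_diag i : coweight i i = 1.
Proof. by rewrite /coweight eqxx. Qed.

Lemma coweight_half i j : i != j -> w i j = 1/2 -> coweight i j = 1/2.
Proof. by rewrite /coweight => /negbTE -> ->; lra. Qed.

Lemma one_sub_two_wform (u : 'I_t -> R) :
  \sum_i u i = 1 -> 1 - 2 * wform w u = \sum_i u i * coload u i.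
Proof.
move=> u_sum1.
pose A (i j : 'I_t) := if (i < j)%N then w i j * u i * u j else 0.
pose B (i j : 'I_t) := if (j < i)%N then w i j * u i * u j else 0.
have split_term i j : u i * (coweight i j * u j) = u i * u j - A i j - B i j.
  rewrite /A /B /coweight -val_eqE /=.
  by case: (ltngtP i j) => [ij|ij|/val_inj->]; rewrite ?eqxx /=; ring.
have sumA : \sum_i \sum_j A i j = wform w u.
  by apply: eq_bigr => i _; rewrite [RHS]big_mkcond.
have sumB : \sum_i \sum_j B i j = wform w u.
  rewrite -sumA exchange_big /=; apply: eq_bigr => i _; apply: eq_bigr => j _.
  by rewrite /A /B w_complete.1; case: ifP => _ //; ring.
have sum_uu : \sum_i \sum_j u i * u j = 1.
  by rewrite -[RHS](mulr1 1) -{1}u_sum1 mulr_suml; apply: eq_bigr => i _;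
    rewrite -u_sum1 mulr_sumr.
transitivity (\sum_i \sum_j (u i * u j - A i j - B i j)).
  rewrite mulr_natl mulr2n opprD addrA -sum_uu -{1}sumA -sumB -!sumrB.
  by apply: eq_bigr => i _; rewrite -!sumrB.
apply: eq_bigr => i _; rewrite /coload mulr_sumr.
by apply: eq_bigr => j _; rewrite split_term.
Qed.

Section NonNegative.
Variable u : 'I_t -> R.
Hypothesis u_ge0 : forall i, 0 <= u i.
Variable mu : R.

Lemma coload_restrict k (f : 'I_k -> 'I_t) i :
  injective f -> \sum_q coweight i (f q) * u (f q) <= coload u i.
Proof.
move=> f_inj; rewrite /coload.
apply: (ler_sum_inj (F := fun j => coweight i j * u j) f_inj) => j.
by rewrite mulr_ge0 ?coweight_ge0.
Qed.

Lemma excess_ge0 i : 0 <= excess u mu i.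
Proof.
have load_ge : u i <= coload u i.
  rewrite /coload (bigD1 i) //= coweight_diag mul1r lerDl.
  by apply: sumr_ge0 => j _; rewrite mulr_ge0 ?coweight_ge0.
have := ler_wpM2l (u_ge0 i) load_ge; have := sqr_ge0 (u i - mu).
rewrite /excess; nra.
Qed.

Lemma sum_excess : \sum_i u i = 1 ->
  \sum_i u i * coload u i = \sum_i excess u mu i + 2 * mu - t%:R * mu ^+ 2.
Proof.
move=> u_sum1; rewrite /excess !big_split /= sumrN -mulr_sumr u_sum1.
by rewrite sumr_const card_ord -mulr_natl; ring.
Qed.

Lemma excess_half_cycle k (f : 'I_k -> 'I_t) :
  (2 < k)%N -> half_cycle w f -> k%:R * mu ^+ 2 / 2 <= \sum_p excess u mu (f p).
Proof.
move=> k_gt2 [f_inj f_half]; have k_gt1 : (1 < k)%N by apply: ltnW.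
pose z p := u (f p).
have load_ge p : z p + z (ordS p) / 2 + z (ord_pred p) / 2 <= coload u (f p).
  apply: le_trans (coload_restrict (f p) f_inj).
  rewrite (bigD1 p) //= (bigD1 (ordS p)) ?ordS_neq //=.
  rewrite (bigD1 (ord_pred p)) /= ?ord_pred_neq ?ord_pred_neq_ordS //.
  have half_next : coweight (f p) (f (ordS p)) = 1/2.
    by rewrite coweight_half ?(inj_eq f_inj) 1?eq_sym ?ordS_neq.
  have half_prev : coweight (f p) (f (ord_pred p)) = 1/2.
    rewrite coweight_half ?(inj_eq f_inj) 1?eq_sym ?ord_pred_neq //.
    by rewrite w_complete.1 -{2}(ord_predK p) f_half.
  rewrite coweight_diag half_next half_prev /z.
  suff : 0 <= \sum_(q | (q != p) && (q != ordS p) && (q != ord_pred p))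
      coweight (f p) (f q) * u (f q) by lra.
  by apply: sumr_ge0 => q _; rewrite mulr_ge0 ?coweight_ge0.
(* Per vertex, excess >= mu^2/2 + square + (G p - G (ordS p)); the G-terms
   telescope around the cycle. *)
pose G p := (z p ^+ 2 + z p * z (ord_pred p)) / 2 - mu * z p.
have vertex_bound p : (z p + z (ordS p) - mu) ^+ 2 / 2 + mu ^+ 2 / 2
    + (G p - G (ordS p)) <= excess u mu (f p).
  have := ler_wpM2l (u_ge0 (f p)) (load_ge p).
  by rewrite /excess /G ordSK /z; nra.
apply: le_trans (ler_sum _ (fun p _ => vertex_bound p)).
rewrite big_split /= sumrB -(reindex_inj (P := xpredT) (F := G) (@ordS_inj k)).
rewrite subrr addr0 big_split /=.
rewrite sumr_const card_ord -[_ / 2 *+ k]mulr_natl mulrA -[leLHS]add0r lerD2r.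
by apply: sumr_ge0 => p _; rewrite divr_ge0 ?sqr_ge0.
Qed.

Lemma excess_half_clique k (f : 'I_k -> 'I_t) :
  half_clique w f -> k%:R * (k%:R - 1) / (k%:R + 1) * mu ^+ 2 <= \sum_p excess u mu (f p).
Proof.
move=> [f_inj f_half].
pose z p := u (f p); pose s := \sum_q z q.
have load_ge p : z p / 2 + s / 2 <= coload u (f p).
  apply: le_trans (coload_restrict (f p) f_inj).
  rewrite (bigD1 p) //= /s (bigD1 p) //= coweight_diag mul1r.
  suff -> : \sum_(q | q != p) coweight (f p) (f q) * u (f q) = \sum_(q | q != p) z q / 2.
    by rewrite -mulr_suml /z; lra.
  apply: eq_bigr => q qp.
  rewrite coweight_half ?f_half 1?eq_sym //; first by rewrite /z; lra.
  by rewrite (inj_eq f_inj).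
(* Completing the square per vertex around al = 2 mu / (k + 1), the optimal
   value of z p when all z p are equal. *)
pose K : R := k%:R; pose al := 2 * mu / (K + 1).
have K_ge0 : 0 <= K by rewrite ler0n.
have vertex_bound p : (z p - al) ^+ 2 / 2 + ((s / 2 + al - 2 * mu) * z p
    + (mu ^+ 2 - al ^+ 2 / 2)) <= excess u mu (f p).
  have := ler_wpM2l (u_ge0 (f p)) (load_ge p).
  by rewrite /excess /z; nra.
apply: le_trans (ler_sum _ (fun p _ => vertex_bound p)).
rewrite big_split /= big_split /= -mulr_sumr -/s sumr_const card_ord.
have squares_ge0 : 0 <= \sum_p (z p - al) ^+ 2 / 2.
  by apply: sumr_ge0 => p _; rewrite divr_ge0 ?sqr_ge0.
have complete_square : (s / 2 + al - 2 * mu) * s + (mu ^+ 2 - al ^+ 2 / 2) *+ k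
    - K * (K - 1) / (K + 1) * mu ^+ 2 = (s - 2 * K * mu / (K + 1)) ^+ 2 / 2.
  by rewrite -mulr_natr -/K /al; field; lra.
by have := sqr_ge0 (s - 2 * K * mu / (K + 1)); lra.
Qed.

End NonNegative.
End Excess.

(* k/2 for each half C_k and k(k-1)/(k+1) for each half K_k. *)
Definition packing_saving (R : numFieldType) (l1 l2 l3 l4 l5 l6 l7 : nat) : R :=
  4 * l1%:R + 10/3 * l2%:R + 5/2 * l3%:R + 12/5 * l4%:R + 2 * l5%:R
  + 3/2 * l6%:R + 2/3 * l7%:R.

Section Packing.
Variables (R : realType) (t l1 l2 l3 l4 l5 l6 l7 : nat) (w : 'I_t -> 'I_t -> R).
Hypothesis w_complete : weighted_complete w.
Variables (c1 : 'I_l1 -> 'I_8 -> 'I_t) (c2 : 'I_l2 -> 'I_5 -> 'I_t)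
  (c3 : 'I_l3 -> 'I_5 -> 'I_t) (c4 : 'I_l4 -> 'I_4 -> 'I_t)
  (c5 : 'I_l5 -> 'I_4 -> 'I_t) (c6 : 'I_l6 -> 'I_3 -> 'I_t)
  (c7 : 'I_l7 -> 'I_2 -> 'I_t).
Hypotheses (H1 : forall a, half_cycle w (c1 a)) (H2 : forall a, half_clique w (c2 a))
  (H3 : forall a, half_cycle w (c3 a)) (H4 : forall a, half_clique w (c4 a))
  (H5 : forall a, half_cycle w (c5 a)) (H6 : forall a, half_clique w (c6 a))
  (H7 : forall a, half_clique w (c7 a)).
Hypothesis packing_inj : injective (packing_map c1 c2 c3 c4 c5 c6 c7).

Lemma packing_saving_le_sum_excess (u : 'I_t -> R) mu : (forall i, 0 <= u i) ->
  packing_saving R l1 l2 l3 l4 l5 l6 l7 * mu ^+ 2 <= \sum_i excess w u mu i.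
Proof.
move=> u_ge0.
apply: le_trans (ler_sum_inj (F := excess w u mu) packing_inj
  (fun i => excess_ge0 w_complete u_ge0 mu i)).
have cyc k (f : 'I_k -> 'I_t) := excess_half_cycle w_complete u_ge0 mu (f := f).
have cli k (f : 'I_k -> 'I_t) := excess_half_clique w_complete u_ge0 mu (f := f).
have b1 := ler_sum_blocks (F := excess w u mu) (fun a => cyc 8 _ isT (H1 a)).
have b2 := ler_sum_blocks (F := excess w u mu) (fun a => cli 5 _ (H2 a)).
have b3 := ler_sum_blocks (F := excess w u mu) (fun a => cyc 5 _ isT (H3 a)).
have b4 := ler_sum_blocks (F := excess w u mu) (fun a => cli 4 _ (H4 a)).
have b5 := ler_sum_blocks (F := excess w u mu) (fun a => cyc 4 _ isT (H5 a)).
have b6 := ler_sum_blocks (F := excess w u mu) (fun a => cli 3 _ (H6 a)).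
have b7 := ler_sum_blocks (F := excess w u mu) (fun a => cli 2 _ (H7 a)).
rewrite !big_sumType /=.
apply: le_trans (lerD b1 (lerD b2 (lerD b3 (lerD b4 (lerD b5 (lerD b6 b7)))))).
by rewrite le_eqVlt; apply/predU1l; rewrite /packing_saving; field.
Qed.

Lemma one_sub_two_wform_ge (u : 'I_t -> R) mu : simplex u ->
  2 * mu - (t%:R - packing_saving R l1 l2 l3 l4 l5 l6 l7) * mu ^+ 2 <= 1 - 2 * wform w u.
Proof.
move=> [u_ge0 u_sum1].
rewrite (one_sub_two_wform w_complete u_sum1) (sum_excess w mu u_sum1).
by have := packing_saving_le_sum_excess mu u_ge0; lra.
Qed.

End Packing.

Lemma two_wform_le (R : realType) t (w : 'I_t -> 'I_t -> R) (u : 'I_t -> R) (D : R) :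
  (forall mu, 2 * mu - D * mu ^+ 2 <= 1 - 2 * wform w u) -> 2 * wform w u <= 1 - D^-1.
Proof.
move=> bound; have [D_gt0|D_le0] := ltP 0 D.
  have := bound D^-1; rewrite expr2 mulrA mulfV ?gt_eqF // mul1r; lra.
have : D^-1 <= 0 by rewrite invr_le0.
by have := bound 0; lra.
Qed.

Lemma two_edge_density_le (R : realType) t (w : 'I_t -> 'I_t -> R) (D : R) :
  D <= t%:R ->
  (forall u, simplex u -> forall mu, 2 * mu - D * mu ^+ 2 <= 1 - 2 * wform w u) ->
  2 * edge_density w <= 1 - D^-1.
Proof.
move=> D_le_t bound; case: (posnP t) => [t0|t_gt0].
  have no_point : @simplex R t = set0.
    apply/seteqP; split => // u [_]; rewrite big_pred0 => [/esym/eqP|i].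
      by rewrite oner_eq0.
    by case: i => i; rewrite t0.
  rewrite /edge_density no_point image_set0 sup0 mulr0 subr_ge0.
  by rewrite t0 in D_le_t; rewrite (le_trans _ ler01) // invr_le0.
suff : edge_density w <= (1 - D^-1) / 2 by lra.
apply: ge_sup => [|_ [u u_simplex <-]].
  exists (wform w (fun=> t%:R^-1)), (fun=> t%:R^-1) => //.
  split=> [i|]; first by rewrite invr_ge0 ler0n.
  by rewrite sumr_const card_ord -[_ *+ t]mulr_natr mulVf // pnatr_eq0 -lt0n.
by have := two_wform_le (bound u u_simplex); lra.
Qed.

Theorem mainTheorem7 (R : realType) (t l1 l2 l3 l4 l5 l6 l7 : nat)
  (w : 'I_t -> 'I_t -> R) (Hw : weighted_complete w)
  (c1 : 'I_l1 -> 'I_8 -> 'I_t) (c2 : 'I_l2 -> 'I_5 -> 'I_t)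
  (c3 : 'I_l3 -> 'I_5 -> 'I_t) (c4 : 'I_l4 -> 'I_4 -> 'I_t)
  (c5 : 'I_l5 -> 'I_4 -> 'I_t) (c6 : 'I_l6 -> 'I_3 -> 'I_t)
  (c7 : 'I_l7 -> 'I_2 -> 'I_t)
  (H1 : forall a, half_cycle w (c1 a))
  (H2 : forall a, half_clique w (c2 a))
  (H3 : forall a, half_cycle w (c3 a))
  (H4 : forall a, half_clique w (c4 a))
  (H5 : forall a, half_cycle w (c5 a))
  (H6 : forall a, half_clique w (c6 a))
  (H7 : forall a, half_clique w (c7 a))
  (Hdisj : injective (packing_map c1 c2 c3 c4 c5 c6 c7)) :
  2 * edge_density w <=
  1 - 30 / (30 * t%:R - 120 * l1%:R - 100 * l2%:R - 75 * l3%:R - 72 * l4%:R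
            - 60 * l5%:R - 45 * l6%:R - 20 * l7%:R).
Proof.
set D := t%:R - packing_saving R l1 l2 l3 l4 l5 l6 l7.
have -> : 30 * t%:R - 120 * l1%:R - 100 * l2%:R - 75 * l3%:R - 72 * l4%:R
    - 60 * l5%:R - 45 * l6%:R - 20 * l7%:R = 30 * D.
  by rewrite /D /packing_saving; field.
rewrite invfM mulrA mulfV ?mul1r ?pnatr_eq0 //.
apply: two_edge_density_le => [|u u_simplex mu].
  by rewrite gerBl /packing_saving !addr_ge0 ?mulr_ge0 ?invr_ge0 ?ler0n.
exact: (one_sub_two_wform_ge Hw H1 H2 H3 H4 H5 H6 H7 Hdisj).
Qed.
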